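(* Let $A$ be a basic connected finite dimensional algebra over an algebraically closed field $k$ with ordinary quiver $Q$ without oriented cycles. Let $\nu\colon kQ\twoheadrightarrow A$ be a presentation with $I=\mathsf{Ker}(\nu)$, and let $\psi\colon kQ\xrightarrow{\sim}kQ$ be an automorphism with $\psi(e_i)=e_i$ for all $i$ and $\psi(I)=I$. Let $\mu:=\nu\circ\psi$ (so $\mathsf{Ker}(\mu)=I$), and let $\overline\psi\colon A\xrightarrow{\sim}A$ be the $k$-algebra automorphism with $\overline\psi\circ\mu=\mu\circ\psi$. Then $\theta_\mu=\overline\psi_*\circ\theta_\nu$. In particular $\mathsf{Im}(\theta_\mu)=\overline\psi_*(\mathsf{Im}(\theta_\nu))$.
   Context: Fix a complete set $e_1,\dots,e_n$ of primitive orthogonal idempotents of $A$ indexed by $Q_0=\{1,\dots,n\}$, $E=\bigoplus ke_i$. A presentation is a surjective algebra map $\nu\colon kQ\twoheadrightarrow A$ with admissible kernel ($(kQ^+)^N\subseteq\mathsf{Ker}\,\nu\subseteq(kQ^+)^2$ for some $N\ge2$, $kQ^+$ the arrow ideal) and $\nu(e_i)=e_i$. $\mathsf{HH}^1(A)=Der_0(A)/Int_0(A)$, with $Der_0(A)$ the Lie algebra (commutator) of derivations vanishing on all $e_i$ and $Int_0(A)=\{a\mapsto ea-ae\mid e\in E\}$. For an automorphism $\phi$ of $A$ fixing every $e_i$, $\phi_*$ is the Lie algebra automorphism of $\mathsf{HH}^1(A)$ induced by $d\mapsto\phi\circ d\circ\phi^{-1}$. Walks: paths with formal inverse arrows allowed.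 $\sim_I$ is the smallest equivalence relation on walks with $\alpha\alpha^{-1}\sim_I e_y$, $\alpha^{-1}\alpha\sim_I e_x$ for arrows $\alpha\colon x\to y$, compatible with concatenation, and identifying two paths occurring with nonzero coefficient in a same minimal relation of $I$ (a nonzero $\sum t_iu_i\in I$, $t_i\neq0$, distinct paths, no nonempty proper subsum in $I$). $\pi_1(Q,I)$ is the group of classes of closed walks at a fixed vertex $x_0$. Fix a maximal tree $T$ of $Q$, $\gamma_x$ the minimal walk in $T$ from $x_0$ to $x$. For a presentation $\nu$ with kernel $I$ and a group homomorphism $f\colon\pi_1(Q,I)\to k^+$, $\theta_\nu(f)$ is the class of the derivation $\tilde f$ with $\tilde f(\nu(u))=f([\gamma_y^{-1}u\gamma_x]_I)\nu(u)$ for paths $u$ from $x$ to $y$. *)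

From HB Require Import structures.
From mathcomp Require Import all_boot all_order all_algebra.
From mathcomp Require Import falgebra.
From Stdlib Require Import ClassicalEpsilon.
Set Implicit Arguments.
Unset Strict Implicit.
Unset Printing Implicit Defensive.
Import GRing.Theory.
Local Open Scope ring_scope.

Section Quiver.
Variables (n : nat) (Ar : finType) (src tgt : Ar -> 'I_n).

(* A path: starting vertex together with its arrows listed in travel order.
   (x, [::]) is the trivial path e_x. *)
Definition qpath := ('I_n * seq Ar)%type.
Definition pend (p : qpath) : 'I_n := last p.1 (map tgt p.2).
Definition pvalid (p : qpath) : bool :=
  if p.2 is a :: s then (src a == p.1) && path (fun a b => tgt a == src b) a s
  else true.

Definition acyclic_quiver : Prop :=
  forall p : qpath, pvalid p -> pend p = p.1 -> p.2 = [::].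

(* Walks: letters are arrows (inl a) or formal inverses of arrows (inr a). *)
Definition letter := (Ar + Ar)%type.
Definition lsrc (l : letter) := match l with inl a => src a | inr a => tgt a end.
Definition ltgt (l : letter) := match l with inl a => tgt a | inr a => src a end.
Definition lflip (l : letter) : letter :=
  match l with inl a => inr a | inr a => inl a end.
Definition larrow (l : letter) : Ar := match l with inl a => a | inr a => a end.
Definition walk := ('I_n * seq letter)%type.
Definition wend (w : walk) : 'I_n := last w.1 (map ltgt w.2).
Definition wvalid (w : walk) : bool :=
  if w.2 is l :: s then (lsrc l == w.1) && path (fun l1 l2 => ltgt l1 == lsrc l2) l s
  else true.
Definition winv (s : seq letter) : seq letter := rev (map lflip s).
Definition path_walk (p : qpath) : walk := (p.1, map inl p.2).
Definition reduced (s : seq letter) : bool :=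
  if s is l :: s' then path (fun l1 l2 => l2 != lflip l1) l s' else true.

(* T : {set Ar} is a maximal (= spanning, Q being connected) tree of Q. *)
Definition twalk (T : {set Ar}) (s : seq letter) : bool :=
  all (fun l => larrow l \in T) s.
Definition spanning_tree (T : {set Ar}) : Prop :=
  (forall x y : 'I_n, exists s, [/\ wvalid (x, s), wend (x, s) = y & twalk T s]) /\
  (forall x s, wvalid (x, s) -> wend (x, s) = x -> twalk T s -> reduced s -> s = [::]).
Definition tree_geodesics (T : {set Ar}) (x0 : 'I_n) (gamma : 'I_n -> seq letter) :=
  forall x, [/\ wvalid (x0, gamma x), wend (x0, gamma x) = x, twalk T (gamma x) &
    forall s, wvalid (x0, s) -> wend (x0, s) = x -> twalk T s ->
      (size (gamma x) <= size s)%N].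

Section PathAlgebra.
Variable k : fieldType.

Definition kQ := qpath -> k.
Definition is_kQ (r : kQ) : Prop :=
  (forall p, ~~ pvalid p -> r p = 0) /\
  exists s : seq qpath, forall p, r p != 0 -> p \in s.
Definition kQadd (r s : kQ) : kQ := fun p => r p + s p.
Definition kQscale (c : k) (r : kQ) : kQ := fun p => c * r p.
(* multiplication: composition of paths, (u v) = "first v then u" *)
Definition kQmul (r s : kQ) : kQ := fun p =>
  \sum_(i < (size p.2).+1)
     r (pend (p.1, take i p.2), drop i p.2) * s (p.1, take i p.2).
Definition kQpath (u : qpath) : kQ := fun p => (p == u)%:R.
Definition kQe (x : 'I_n) : kQ := kQpath (x, [::]).
Definition kQone : kQ := fun p => (p.2 == [::])%:R.
Definition kQ_restrict (r : kQ) (S : pred qpath) : kQ :=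
  fun p => if S p then r p else 0.

Definition minimal_relation (I : kQ -> Prop) (r : kQ) : Prop :=
  [/\ I r, exists p, r p != 0 &
    forall S : pred qpath, (exists p, S p && (r p != 0)) ->
      (exists p, ~~ S p && (r p != 0)) -> ~ I (kQ_restrict r S)].

Inductive walk_equiv (I : kQ -> Prop) : walk -> walk -> Prop :=
| we_refl w : walk_equiv I w w
| we_sym w1 w2 : walk_equiv I w1 w2 -> walk_equiv I w2 w1
| we_trans w1 w2 w3 : walk_equiv I w1 w2 -> walk_equiv I w2 w3 -> walk_equiv I w1 w3
| we_cancel_src a : walk_equiv I (src a, [:: inl a; inr a]) (src a, [::])
| we_cancel_tgt a : walk_equiv I (tgt a, [:: inr a; inl a]) (tgt a, [::])
| we_rel r u v : minimal_relation I r -> r u != 0 -> r v != 0 ->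
    walk_equiv I (path_walk u) (path_walk v)
| we_ctx x s1 s2 w1 w2 : walk_equiv I w1 w2 ->
    w1.1 = wend (x, s1) -> w2.1 = w1.1 -> wend w1 = wend w2 ->
    wvalid (x, s1 ++ w1.2 ++ s2) -> wvalid (x, s1 ++ w2.2 ++ s2) ->
    walk_equiv I (x, s1 ++ w1.2 ++ s2) (x, s1 ++ w2.2 ++ s2).

Definition closed_at (x0 : 'I_n) (s : seq letter) : Prop :=
  wvalid (x0, s) /\ wend (x0, s) = x0.
(* a group homomorphism pi_1(Q,I) -> k^+, given on representatives
   (closed walks at x0): constant on ~_I-classes and additive. *)
Definition pi1_hom (I : kQ -> Prop) (x0 : 'I_n) (F : seq letter -> k) : Prop :=
  (forall s s', closed_at x0 s -> closed_at x0 s' ->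
     walk_equiv I (x0, s) (x0, s') -> F s = F s') /\
  (forall s s', closed_at x0 s -> closed_at x0 s' -> F (s ++ s') = F s + F s').

Definition kQ_aut (psi : kQ -> kQ) : Prop :=
  (forall r, is_kQ r -> is_kQ (psi r)) /\
  [/\
      forall r s, is_kQ r -> is_kQ s -> psi (kQadd r s) = kQadd (psi r) (psi s),
      forall c r, is_kQ r -> psi (kQscale c r) = kQscale c (psi r),
      forall r s, is_kQ r -> is_kQ s -> psi (kQmul r s) = kQmul (psi r) (psi s) &
      psi kQone = kQone] /\
      exists psi' : kQ -> kQ, [/\ forall r, is_kQ r -> is_kQ (psi' r),
         forall r, is_kQ r -> psi' (psi r) = r &
         forall r, is_kQ r -> psi (psi' r) = r].

Section Algebra.
Variable A : falgType k.

Definition alg_hom_kQ (nu : kQ -> A) : Prop :=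
  [/\ forall r s, is_kQ r -> is_kQ s -> nu (kQadd r s) = nu r + nu s,
      forall c r, is_kQ r -> nu (kQscale c r) = c *: nu r,
      forall r s, is_kQ r -> is_kQ s -> nu (kQmul r s) = nu r * nu s &
      nu kQone = 1].

(* presentation: surjective algebra map with admissible kernel, nu(e_i) = e_i;
   (kQ^+)^N is the span of the paths of length >= N. *)
Definition presentation (e : 'I_n -> A) (nu : kQ -> A) : Prop :=
  [/\ alg_hom_kQ nu,
      forall a, exists r, is_kQ r /\ nu r = a,
      forall i, nu (kQe i) = e i &
      exists N : nat, [/\ (2 <= N)%N,
        forall r, is_kQ r -> (forall p, (size p.2 < N)%N -> r p = 0) -> nu r = 0 &
        forall r, is_kQ r -> nu r = 0 -> forall p, (size p.2 < 2)%N -> r p = 0]].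

Definition in_ker (nu : kQ -> A) (r : kQ) : Prop := is_kQ r /\ nu r = 0.

Definition complete_prim_orth (e : 'I_n -> A) : Prop :=
  [/\ \sum_i e i = 1,
      forall i j, e i * e j = (if i == j then e i else 0) &
      forall i, e i != 0 /\
        forall a b : A, a * a = a -> b * b = b -> a * b = 0 -> b * a = 0 ->
          a + b = e i -> a = 0 \/ b = 0].

(* basic: the indecomposable projectives e_i A are pairwise non-isomorphic *)
Definition basic_wrt (e : 'I_n -> A) : Prop :=
  forall i j, i != j -> ~ exists a b : A,
    [/\ a = e i * a * e j, b = e j * b * e i, a * b = e i & b * a = e j].

End Algebra.
End PathAlgebra.
End Quiver.

Section Hochschild.
Variables (k : fieldType) (A : falgType k).

Definition connected_alg : Prop :=
  forall c : A, c * c = c -> (forall a, c * a = a * c) -> c = 0 \/ c = 1.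

Definition alg_aut (phi phiinv : A -> A) : Prop :=
  [/\ forall a b, phi (a + b) = phi a + phi b,
      forall (c : k) a, phi (c *: a) = c *: phi a,
      forall a b, phi (a * b) = phi a * phi b &
      phi 1 = 1] /\ cancel phi phiinv /\ cancel phiinv phi.

Definition derivation (d : A -> A) : Prop :=
  [/\ forall a b, d (a + b) = d a + d b,
      forall (c : k) a, d (c *: a) = c *: d a &
      forall a b, d (a * b) = d a * b + a * d b].

Definition inner0 (n : nat) (e : 'I_n -> A) (d : A -> A) : Prop :=
  exists c : 'I_n -> k, forall a,
    d a = (\sum_i c i *: e i) * a - a * (\sum_i c i *: e i).
(* equality of classes in HH^1(A) = Der_0(A)/Int_0(A) *)
Definition hh1_eq (n : nat) (e : 'I_n -> A) (d1 d2 : A -> A) : Prop :=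
  inner0 e (fun a => d1 a - d2 a).
Definition push (phi phiinv : A -> A) (d : A -> A) : A -> A :=
  fun a => phi (d (phiinv a)).
End Hochschild.

Definition theta_rep (n : nat) (Ar : finType) (src tgt : Ar -> 'I_n)
  (k : fieldType) (A : falgType k) (nu : kQ n Ar k -> A)
  (gamma : 'I_n -> seq (letter Ar)) (F : seq (letter Ar) -> k) (d : A -> A) : Prop :=
  derivation d /\
  forall u : qpath n Ar, pvalid src tgt u ->
    d (nu (@kQpath n Ar k u)) =
      F (gamma u.1 ++ map inl u.2 ++ winv (gamma (pend tgt u))) *: nu (@kQpath n Ar k u).

Definition theta (n : nat) (Ar : finType) (src tgt : Ar -> 'I_n)
  (k : fieldType) (A : falgType k) (nu : kQ n Ar k -> A)
  (gamma : 'I_n -> seq (letter Ar)) (F : seq (letter Ar) -> k) : A -> A :=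
  epsilon (inhabits id) (theta_rep src tgt nu gamma F).

(* For f : pi_1(Q, I) -> k^+, the operator u |-> f(gamma_y^-1 u gamma_x) u
   on kQ is a derivation, because f is additive along the concatenation of paths
   (the tree walks inserted in between cancel up to ~_I), and it maps Ker nu into
   itself, because every element of Ker nu is a sum of minimal relations and the paths
   of a minimal relation are parallel and ~_I-homotopic, so the operator acts on each
   of them by a scalar.  It therefore descends to a derivation of A with the defining
   values of theta_nu f.  A derivation of A is determined by its values on the images
   of paths, and conjugating by psib turns these values for nu into those for
   mu = nu o psi, since psib o nu = mu.  So theta_mu f = psib_* (theta_nu f) holds
   already on the level of derivations, with no inner correction. *)

From HB Require Import structures.
From mathcomp Require Import all_boot all_order all_algebra.
From mathcomp Require Import falgebra.
From Stdlib Require Import ClassicalEpsilon FunctionalExtensionality Classical.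
Set Implicit Arguments.
Unset Strict Implicit.
Unset Printing Implicit Defensive.
Import GRing.Theory.
Local Open Scope ring_scope.

Section Walks.
Variables (n : nat) (Ar : finType) (src tgt : Ar -> 'I_n).
Implicit Types (x : 'I_n) (s : seq (letter Ar)) (p : qpath n Ar).

Fixpoint wpath x s : bool :=
  if s is l :: s' then (lsrc src tgt l == x) && wpath (ltgt src tgt l) s' else true.

Lemma wvalidE x s : wvalid src tgt (x, s) = wpath x s.
Proof.
case: s => //= l s; congr andb; elim: s l => //= l2 s IH l.
by rewrite IH eq_sym.
Qed.

Lemma wpath_cat x s1 s2 :
  wpath x (s1 ++ s2) = wpath x s1 && wpath (wend src tgt (x, s1)) s2.
Proof. by elim: s1 x => [|l s1 IH] x //=; rewrite IH andbA. Qed.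

Lemma wend_cat x s1 s2 :
  wend src tgt (x, s1 ++ s2) = wend src tgt (wend src tgt (x, s1), s2).
Proof. by rewrite /wend /= map_cat last_cat. Qed.

Lemma winv_rcons l s : winv (rcons s l) = lflip l :: winv s.
Proof. by rewrite /winv map_rcons rev_rcons. Qed.

Lemma wpath_winv x s : wpath x s ->
  wpath (wend src tgt (x, s)) (winv s) /\ wend src tgt (wend src tgt (x, s), winv s) = x.
Proof.
elim: s x => [|l s IH] x //= /andP [/eqP <- /IH [h1 h2]].
rewrite /winv /= rev_cons -/(winv s) -cats1 wpath_cat wend_cat h1 h2.
by case: l {h1 h2} => a /=; rewrite eqxx.
Qed.

Lemma pvalidE p : pvalid src tgt p = wpath p.1 (map inl p.2).
Proof.
case: p => x [|a s] //=; congr andb; elim: s a => //= b s IH a.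
by rewrite IH eq_sym.
Qed.

Lemma pendE p : pend tgt p = wend src tgt (p.1, map inl p.2).
Proof. by rewrite /pend /wend /= -map_comp. Qed.

Definition ptake i p : qpath n Ar := (p.1, take i p.2).
Definition pdrop i p : qpath n Ar := (pend tgt (ptake i p), drop i p.2).

Lemma pvalid_cat p i :
  pvalid src tgt (ptake i p) -> pvalid src tgt (pdrop i p) -> pvalid src tgt p.
Proof.
rewrite !pvalidE /= pendE => h1 h2.
by rewrite -(cat_take_drop i p.2) map_cat wpath_cat h1 h2.
Qed.

Lemma pend_pdrop p i : pend tgt (pdrop i p) = pend tgt p.
Proof. by rewrite /pend /= -last_cat -map_cat cat_take_drop. Qed.

Lemma closed_at_cat x0 s s' :
  closed_at src tgt x0 s -> closed_at src tgt x0 s' -> closed_at src tgt x0 (s ++ s').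
Proof.
case; rewrite wvalidE => v1 e1 []; rewrite wvalidE => v2 e2.
by split; rewrite ?wvalidE ?wpath_cat ?wend_cat e1 ?v1.
Qed.

Variables (k : fieldType) (I : kQ n Ar k -> Prop).
Notation weq := (walk_equiv src tgt I).

Lemma walk_equiv_ctx x s1 s2 y a b z :
  weq (y, a) (y, b) -> wpath x s1 -> wend src tgt (x, s1) = y ->
  wpath y a -> wpath y b -> wend src tgt (y, a) = z -> wend src tgt (y, b) = z ->
  wpath z s2 -> weq (x, s1 ++ a ++ s2) (x, s1 ++ b ++ s2).
Proof.
move=> h v1 e1 va vb ea eb v2.
apply: (we_ctx (w1 := (y, a)) (w2 := (y, b))) => //=.
- by rewrite ea eb.
- by rewrite wvalidE !wpath_cat v1 e1 va ea v2.
- by rewrite wvalidE !wpath_cat v1 e1 vb eb v2.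
Qed.

Lemma walk_equiv_winv_cat x s : wpath x s ->
  weq (wend src tgt (x, s), winv s ++ s) (wend src tgt (x, s), [::]).
Proof.
elim/last_ind: s => [|s l IH]; first by move=> _; apply: we_refl.
rewrite -cats1 wpath_cat => /andP [hs /= /andP [/eqP el _]].
have [i1 i2] := wpath_winv hs.
rewrite cats1 winv_rcons -cats1 wend_cat /=.
have -> : lflip l :: winv s ++ s ++ [:: l] = [:: lflip l] ++ (winv s ++ s) ++ [:: l].
  by rewrite catA.
apply: (we_trans (w2 := (ltgt src tgt l, [:: lflip l] ++ [::] ++ [:: l]))).
  apply: (walk_equiv_ctx (y := wend src tgt (x, s)) (z := wend src tgt (x, s))).
  - exact: IH hs.
  - by case: l {el} => a /=; rewrite eqxx.
  - by case: l el.
  - by rewrite wpath_cat i1 i2 hs.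
  - by [].
  - by rewrite wend_cat i2.
  - by [].
  - by rewrite /= el eqxx.
by case: l el => a _; [apply: we_cancel_tgt | apply: we_cancel_src].
Qed.

End Walks.

Arguments pendE {n Ar} src {tgt} p.

Section PathAlgebra.
Variables (n : nat) (Ar : finType) (src tgt : Ar -> 'I_n) (k : fieldType).
Notation kq := (kQ n Ar k).
Notation is_kQ := (@is_kQ n Ar src tgt k).
Implicit Types (r s : kq) (p u : qpath n Ar).

Lemma pvalid_supp r p : is_kQ r -> r p != 0 -> pvalid src tgt p.
Proof. by case=> h _ nz; apply/negP => /negP /h; apply/eqP. Qed.

Lemma is_kQ0 : is_kQ (fun _ => 0).
Proof. by split=> //; exists [::] => p; rewrite eqxx. Qed.

Lemma is_kQ_restrict r S : is_kQ r -> is_kQ (kQ_restrict r S).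
Proof.
case=> h [l hl]; split=> [p hp|]; first by rewrite /kQ_restrict h // if_same.
by exists l => p; rewrite /kQ_restrict; case: (S p) => [/hl|]; rewrite ?eqxx.
Qed.

Lemma is_kQ_add r s : is_kQ r -> is_kQ s -> is_kQ (kQadd r s).
Proof.
case=> h1 [l1 hl1] [h2 [l2 hl2]]; split=> [p hp|].
  by rewrite /kQadd h1 // h2 // addr0.
exists (l1 ++ l2) => p; rewrite /kQadd mem_cat.
have [->|/hl1 -> //] := eqVneq (r p) 0; rewrite add0r => /hl2 ->; exact: orbT.
Qed.

Lemma is_kQ_scale c r : is_kQ r -> is_kQ (kQscale c r).
Proof.
case=> h [l hl]; split=> [p hp|]; first by rewrite /kQscale h // mulr0.
by exists l => p; rewrite /kQscale mulf_eq0 negb_or => /andP [_ /hl].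
Qed.

Lemma is_kQ_path u : pvalid src tgt u -> is_kQ (kQpath k u).
Proof.
move=> hu; split=> [p|]; rewrite /kQpath; first by case: eqP => // ->; rewrite hu.
by exists [:: u] => p; rewrite mem_seq1; case: (p == u); rewrite ?eqxx.
Qed.

Lemma is_kQ_e x : is_kQ (kQe k x).
Proof. exact: is_kQ_path. Qed.

Lemma is_kQ_mul r s : is_kQ r -> is_kQ s -> is_kQ (kQmul tgt r s).
Proof.
move=> hr hs; have [_ [l1 hl1]] := hr; have [_ [l2 hl2]] := hs.
pose l := [seq (b.1, b.2 ++ t.2) | b <- l2, t <- l1].
have supp p (i : 'I_(size p.2).+1) :
    r (pdrop tgt i p) * s (ptake i p) != 0 -> pvalid src tgt p && (p \in l).
  rewrite mulf_eq0 negb_or => /andP [nr ns].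
  rewrite (pvalid_cat (pvalid_supp hs ns) (pvalid_supp hr nr)).
  have -> : p = ((ptake i p).1, (ptake i p).2 ++ (pdrop tgt i p).2).
    by rewrite /= cat_take_drop -surjective_pairing.
  by apply: allpairs_f; [apply: hl2 | apply: hl1].
split=> [p hp|].
  rewrite /kQmul big1 // => i _; apply/eqP/negPn/negP => /supp /andP [hv _].
  by rewrite hv in hp.
exists l => p; apply: contraR => hp.
rewrite /kQmul big1 // => i _; apply/eqP/negPn/negP => /supp /andP [_ hv].
by rewrite hv in hp.
Qed.

Lemma kQmul_e_left r y :
  kQmul tgt (kQe k y) r = kQ_restrict r (fun p => pend tgt p == y).
Proof.
apply: functional_extensionality => -[x l]; rewrite /kQmul /kQ_restrict /=.
rewrite big_ord_recr /= big1 ?add0r => [|i _].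
  rewrite take_size drop_size /kQe /kQpath /= xpair_eqE eqxx andbT.
  by case: eqP; rewrite ?mul1r ?mul0r.
rewrite /kQe /kQpath xpair_eqE -size_eq0 size_drop subn_eq0 leqNgt ltn_ord.
by rewrite andbF mul0r.
Qed.

Lemma kQmul_e_right r x :
  kQmul tgt r (kQe k x) = kQ_restrict r (fun p => p.1 == x).
Proof.
apply: functional_extensionality => -[y l]; rewrite /kQmul /kQ_restrict /=.
rewrite big_ord_recl /= big1 ?addr0 => [|i _].
  rewrite take0 drop0 /kQe /kQpath /= xpair_eqE eqxx andbT.
  by case: eqP; rewrite ?mulr1 ?mulr0.
rewrite /kQe /kQpath xpair_eqE.
have -> : (take (bump 0 i) l == [::]) = false.
  by rewrite -size_eq0 size_take; case: ifP => // _; case: (size l) i => [[]|].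
by rewrite andbF mulr0.
Qed.

Lemma is_kQ_ind (P : kq -> Prop) :
  P (fun _ => 0) ->
  (forall c u r, pvalid src tgt u -> is_kQ r -> P r ->
     P (kQadd (kQscale c (kQpath k u)) r)) ->
  forall r, is_kQ r -> P r.
Proof.
move=> P0 Pstep r [hinv [l]]; elim: l r hinv => [|x l IH] r hinv hl.
  suff -> : r = (fun _ => 0) by [].
  by apply: functional_extensionality => p; apply/eqP/negPn/negP => /hl.
case hx: (pvalid src tgt x); last first.
  apply: (IH _ hinv) => p nz; move: (hl _ nz); rewrite in_cons => /orP [/eqP ep|//].
  by move: nz; rewrite ep hinv ?hx ?eqxx.
pose r' p := if p == x then 0 else r p.
have hinv' p : ~~ pvalid src tgt p -> r' p = 0 by move=> hp; rewrite /r' hinv // if_same.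
have hl' p : r' p != 0 -> p \in l.
  rewrite /r'; case: (eqVneq p x) => [_|ne nz]; first by rewrite eqxx.
  by move: (hl _ nz); rewrite in_cons (negbTE ne).
have -> : r = kQadd (kQscale (r x) (kQpath k x)) r'.
  apply: functional_extensionality => p; rewrite /kQadd /kQscale /kQpath /r'.
  by case: eqP => [->|]; rewrite ?mulr1 ?addr0 // mulr0 add0r.
by apply: Pstep (IH _ hinv' hl') => //; split=> //; exists l.
Qed.

End PathAlgebra.

Arguments is_kQ0 {n Ar src tgt k}.
Arguments is_kQ_path {n Ar src tgt k u}.
Arguments is_kQ_e {n Ar src tgt k} x.

Section Kernel.
Variables (n : nat) (Ar : finType) (src tgt : Ar -> 'I_n) (k : fieldType) (A : falgType k).
Notation kq := (kQ n Ar k).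
Notation is_kQ := (@is_kQ n Ar src tgt k).
Variables (nu : kq -> A) (hnu : alg_hom_kQ src tgt nu).
Notation I := (in_ker src tgt nu).
Implicit Types (r s : kq) (p u : qpath n Ar).

Lemma nu0 : nu (fun _ => 0) = 0.
Proof.
have [_ nuZ _ _] := hnu.
have -> : (fun _ => 0) = kQscale 0 (fun _ : qpath n Ar => 0 : k).
  by apply: functional_extensionality => p; rewrite /kQscale mul0r.
by rewrite nuZ ?scale0r //; apply: is_kQ0.
Qed.

Lemma in_ker0 : I (fun _ => 0).
Proof. by split; [apply: is_kQ0 | apply: nu0]. Qed.

Lemma in_ker_add r s : I r -> I s -> I (kQadd r s).
Proof.
case=> hr er [hs es]; split; first exact: is_kQ_add.
by have [nuD _ _ _] := hnu; rewrite nuD // er es addr0.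
Qed.

Lemma in_ker_scale c r : I r -> I (kQscale c r).
Proof.
case=> hr er; split; first exact: is_kQ_scale.
by have [_ nuZ _ _] := hnu; rewrite nuZ // er scaler0.
Qed.

Lemma kQ_restrictC r S : r = kQadd (kQ_restrict r S) (kQ_restrict r (predC S)).
Proof.
apply: functional_extensionality => p; rewrite /kQadd /kQ_restrict /=.
by case: (S p); rewrite ?addr0 ?add0r.
Qed.

Lemma in_ker_restrictC r S : I r -> I (kQ_restrict r S) -> I (kQ_restrict r (predC S)).
Proof.
move=> [hr er] [hS eS]; split; first exact: is_kQ_restrict.
have [nuD _ _ _] := hnu; move: er; rewrite {1}(kQ_restrictC r S) nuD ?eS ?add0r //.
exact: is_kQ_restrict.
Qed.

Lemma count_restrictC r S (l : seq (qpath n Ar)) :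
  count (fun p => r p != 0) l =
  (count (fun p => kQ_restrict r S p != 0%R) l +
   count (fun p => kQ_restrict r (predC S) p != 0%R) l)%N.
Proof.
elim: l => //= p l ->; rewrite /kQ_restrict /=.
case: (S p); rewrite /= eqxx /= ?add0n ?addn0 ?addnA //; congr (_ + _)%N; exact: addnC.
Qed.

Lemma count_restrict_gt0 r S (l : seq (qpath n Ar)) p :
  (forall p, r p != 0 -> p \in l) -> S p && (r p != 0) ->
  (0 < count (fun p => kQ_restrict r S p != 0%R) l)%N.
Proof.
move=> hl /andP [Sp nz]; rewrite -has_count; apply/hasP; exists p; first exact: hl.
by rewrite /kQ_restrict Sp.
Qed.

Lemma in_ker_ind (P : kq -> Prop) :
  P (fun _ => 0) -> (forall r, minimal_relation I r -> P r) ->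
  (forall r s, I r -> I s -> P r -> P s -> P (kQadd r s)) ->
  forall r, I r -> P r.
Proof.
move=> P0 Pmin Padd r hI; have [_ [l hl]] := hI.1.
(* Induction on the support: a nonzero kernel element that is not a minimal
   relation splits into two kernel elements with smaller supports. *)
have [N] := ubnP (count (fun p => r p != 0) l).
elim: N r hI hl => [|N IH] r hI hl; rewrite ?ltn0 // ltnS => hc.
have [/Pmin //|nmin] := classic (minimal_relation I r).
have [[u hu]|hz] := classic (exists p, r p != 0); last first.
  suff -> : r = (fun _ => 0) by [].
  by apply: functional_extensionality => p; apply/eqP/negPn/negP => nz; apply: hz; exists p.
have [S [[p1 h1] [p2 h2] IS]] : exists S : pred (qpath n Ar),
    [/\ exists p, S p && (r p != 0), exists p, ~~ S p && (r p != 0) & I (kQ_restrict r S)].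
  apply: NNPP => hS; apply: nmin; split=> // [|S e1 e2 iS]; first by exists u.
  by apply: hS; exists S.
have ISC := in_ker_restrictC hI IS.
have hlS T p : kQ_restrict r T p != 0 -> p \in l.
  by rewrite /kQ_restrict; case: (T p) => [/hl|]; rewrite ?eqxx.
have c1 := count_restrict_gt0 hl h1.
have c2 := count_restrict_gt0 (S := predC S) hl h2.
move: hc; rewrite (count_restrictC r S) => hc.
rewrite (kQ_restrictC r S); apply: Padd => //; apply: IH => //; try exact: hlS.
- by apply: leq_trans hc; rewrite -addn1 leq_add2l.
- by apply: leq_trans hc; rewrite -add1n leq_add2r.
Qed.

Lemma min_rel_parallel r u p : minimal_relation I r -> r u != 0 -> r p != 0 ->
  p.1 = u.1 /\ pend tgt p = pend tgt u.
Proof.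
case=> [[hr er] _ hmin] hu hp.
pose S q := (q.1 == u.1) && (pend tgt q == pend tgt u).
case hS: (S p); first by case/andP: hS => /eqP -> /eqP ->.
exfalso; apply: (hmin S); first by exists u; rewrite /S !eqxx hu.
  by exists p; rewrite hS hp.
have -> : kQ_restrict r S = kQmul tgt (kQe k (pend tgt u)) (kQmul tgt r (kQe k u.1)).
  rewrite kQmul_e_right kQmul_e_left; apply: functional_extensionality => q.
  by rewrite /kQ_restrict /S; case: (q.1 == u.1); case: (pend tgt q == pend tgt u).
have hru : is_kQ (kQmul tgt r (kQe k u.1)) by apply: is_kQ_mul; last exact: is_kQ_e.
have [_ _ nuM _] := hnu; split; first by apply: is_kQ_mul; first exact: is_kQ_e.
by rewrite (nuM _ _ (is_kQ_e _) hru) (nuM _ _ hr (is_kQ_e _)) er mul0r mulr0.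
Qed.

End Kernel.

Section Diagonal.
Variables (n : nat) (Ar : finType) (src tgt : Ar -> 'I_n) (k : fieldType).
Notation kq := (kQ n Ar k).
Notation is_kQ := (@is_kQ n Ar src tgt k).
Variable w : qpath n Ar -> k.
Implicit Types (r s : kq) (p u : qpath n Ar).

Definition kQdiag r : kq := fun p => w p * r p.

Lemma is_kQ_diag r : is_kQ r -> is_kQ (kQdiag r).
Proof.
case=> h [l hl]; split=> [p hp|]; first by rewrite /kQdiag h // mulr0.
by exists l => p; rewrite /kQdiag mulf_eq0 negb_or => /andP [_ /hl].
Qed.

Lemma kQdiag_add r s : kQdiag (kQadd r s) = kQadd (kQdiag r) (kQdiag s).
Proof. by apply: functional_extensionality => p; rewrite /kQdiag /kQadd mulrDr. Qed.

Lemma kQdiag_scale c r : kQdiag (kQscale c r) = kQscale c (kQdiag r).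
Proof. by apply: functional_extensionality => p; rewrite /kQdiag /kQscale mulrCA. Qed.

Lemma kQdiag_const c r : (forall p, r p != 0 -> w p = c) -> kQdiag r = kQscale c r.
Proof.
move=> hc; apply: functional_extensionality => p; rewrite /kQdiag /kQscale.
by have [->|/hc ->] := eqVneq (r p) 0; rewrite ?mulr0.
Qed.

Lemma kQdiag_path u : kQdiag (kQpath k u) = kQscale (w u) (kQpath k u).
Proof.
by apply: kQdiag_const => p; rewrite /kQpath; case: (eqVneq p u) => [->|_] //=; rewrite eqxx.
Qed.

Hypothesis w_cat : forall p i,
  pvalid src tgt (ptake i p) -> pvalid src tgt (pdrop tgt i p) ->
  w p = w (pdrop tgt i p) + w (ptake i p).

Lemma kQdiag_mul r s : is_kQ r -> is_kQ s ->
  kQdiag (kQmul tgt r s) = kQadd (kQmul tgt (kQdiag r) s) (kQmul tgt r (kQdiag s)).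
Proof.
move=> hr hs; apply: functional_extensionality => p.
rewrite /kQdiag /kQadd /kQmul mulr_sumr -big_split; apply: eq_bigr => i _ /=.
rewrite -/(pdrop tgt i p) -/(ptake i p).
have [->|nr] := eqVneq (r (pdrop tgt i p)) 0; first by rewrite !(mulr0, mul0r, addr0).
have [->|ns] := eqVneq (s (ptake i p)) 0; first by rewrite !(mulr0, mul0r, addr0).
rewrite (w_cat (pvalid_supp hs ns) (pvalid_supp hr nr)).
by rewrite mulrDl !mulrA [w (ptake i p) * _]mulrC.
Qed.

End Diagonal.

Section Descent.
Variables (n : nat) (Ar : finType) (src tgt : Ar -> 'I_n) (k : fieldType) (A : falgType k).
Notation kq := (kQ n Ar k).
Notation is_kQ := (@is_kQ n Ar src tgt k).
Variables (nu : kq -> A) (hnu : alg_hom_kQ src tgt nu).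
Hypothesis nu_surj : forall a, exists r, is_kQ r /\ nu r = a.
Notation I := (in_ker src tgt nu).
Variable w : qpath n Ar -> k.
Hypothesis w_min_rel : forall r u v,
  minimal_relation I r -> r u != 0 -> r v != 0 -> w u = w v.
Implicit Types (r s : kq) (u : qpath n Ar).

Lemma in_ker_diag r : I r -> I (kQdiag w r).
Proof.
apply: (in_ker_ind hnu (P := fun r => I (kQdiag w r))).
- rewrite (kQdiag_const (w := w) (c := 0)) => [|p]; last by rewrite eqxx.
  exact: (in_ker_scale hnu 0 (in_ker0 hnu)).
- move=> q hmin; have [hq [u hu] _] := hmin.
  rewrite (kQdiag_const (w := w) (c := w u)) => [|p hp]; last exact: w_min_rel hmin hp hu.
  exact: (in_ker_scale hnu (w u) hq).
- by move=> q s _ _ hq hs; rewrite kQdiag_add; apply: in_ker_add.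
Qed.

Definition kQ_lift (a : A) : kq :=
  epsilon (inhabits (fun _ => 0)) (fun r => is_kQ r /\ nu r = a).

Lemma kQ_liftP a : is_kQ (kQ_lift a) /\ nu (kQ_lift a) = a.
Proof. exact: epsilon_spec (nu_surj a). Qed.

Definition diag_der (a : A) : A := nu (kQdiag w (kQ_lift a)).

Lemma diag_derE r : is_kQ r -> diag_der (nu r) = nu (kQdiag w r).
Proof.
move=> hr; have [hl el] := kQ_liftP (nu r); have [nuD nuZ _ _] := hnu.
have [Dr Dl] := (is_kQ_diag w hr, is_kQ_diag w hl).
have /in_ker_diag [_] : I (kQadd r (kQscale (-1) (kQ_lift (nu r)))).
  split; first exact/is_kQ_add/is_kQ_scale.
  by rewrite (nuD _ _ hr (is_kQ_scale _ hl)) (nuZ _ _ hl) el scaleN1r subrr.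
rewrite kQdiag_add kQdiag_scale (nuD _ _ Dr (is_kQ_scale _ Dl)) (nuZ _ _ Dl) scaleN1r.
by move/eqP; rewrite subr_eq0 => /eqP.
Qed.

Lemma diag_der_path u : pvalid src tgt u ->
  diag_der (nu (kQpath k u)) = w u *: nu (kQpath k u).
Proof.
move=> /(is_kQ_path (k := k)) hu; have [_ nuZ _ _] := hnu.
by rewrite (diag_derE hu) kQdiag_path (nuZ _ _ hu).
Qed.

Hypothesis w_cat : forall p i,
  pvalid src tgt (ptake i p) -> pvalid src tgt (pdrop tgt i p) ->
  w p = w (pdrop tgt i p) + w (ptake i p).

Lemma derivation_diag_der : derivation diag_der.
Proof.
have [nuD nuZ nuM _] := hnu.
have Dw := is_kQ_diag (src := src) (tgt := tgt) w.
split=> [a b|c a|a b].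
- have [ha <-] := kQ_liftP a; have [hb <-] := kQ_liftP b.
  rewrite -(nuD _ _ ha hb) (diag_derE (is_kQ_add ha hb)) (diag_derE ha) (diag_derE hb).
  by rewrite kQdiag_add (nuD _ _ (Dw _ ha) (Dw _ hb)).
- have [ha <-] := kQ_liftP a.
  rewrite -(nuZ _ _ ha) (diag_derE (is_kQ_scale c ha)) (diag_derE ha) kQdiag_scale.
  exact: nuZ (Dw _ ha).
- have [ha <-] := kQ_liftP a; have [hb <-] := kQ_liftP b.
  rewrite -(nuM _ _ ha hb) (diag_derE (is_kQ_mul ha hb)) (diag_derE ha) (diag_derE hb).
  rewrite (kQdiag_mul w_cat ha hb).
  rewrite (nuD _ _ (is_kQ_mul (Dw _ ha) hb) (is_kQ_mul ha (Dw _ hb))).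
  by rewrite (nuM _ _ (Dw _ ha) hb) (nuM _ _ ha (Dw _ hb)).
Qed.

End Descent.

Section TreeLoops.
Variables (n : nat) (Ar : finType) (src tgt : Ar -> 'I_n) (k : fieldType) (A : falgType k).
Notation kq := (kQ n Ar k).
Notation is_kQ := (@is_kQ n Ar src tgt k).
Variables (nu : kq -> A) (hnu : alg_hom_kQ src tgt nu).
Notation I := (in_ker src tgt nu).
Variables (x0 : 'I_n) (gamma : 'I_n -> seq (letter Ar)) (F : seq (letter Ar) -> k).
Hypothesis gamma_walk : forall x,
  wpath src tgt x0 (gamma x) /\ wend src tgt (x0, gamma x) = x.
Hypothesis hF : pi1_hom src tgt I x0 F.
Implicit Types (p u v : qpath n Ar).

(* The closed walk gamma_y^-1 u gamma_x of the paper, letters in travel order. *)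
Definition tree_loop p := gamma p.1 ++ map inl p.2 ++ winv (gamma (pend tgt p)).

Lemma closed_tree_loop p : pvalid src tgt p -> closed_at src tgt x0 (tree_loop p).
Proof.
rewrite pvalidE => hp; have [g1 g2] := gamma_walk p.1.
have [g3 g4] := gamma_walk (pend tgt p); have [] := wpath_winv g3; rewrite g4 => g5 g6.
by rewrite /closed_at wvalidE /tree_loop !wpath_cat !wend_cat g2 -(pendE src) g1 hp g5 g6.
Qed.

Lemma walk_equiv_tree_loop_cat p i :
  pvalid src tgt (ptake i p) -> pvalid src tgt (pdrop tgt i p) ->
  walk_equiv src tgt I (x0, tree_loop (ptake i p) ++ tree_loop (pdrop tgt i p))
                       (x0, tree_loop p).
Proof.
rewrite !pvalidE /= => hb ht.
set y := pend tgt (ptake i p); rewrite -/y in ht.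
have [g1 g2] := gamma_walk p.1; have [g3 g4] := gamma_walk y.
have [] := wpath_winv g3; rewrite g4 => i3 i4.
have [g5 g6] := gamma_walk (pend tgt p); have [] := wpath_winv g5; rewrite g6 => i5 i6.
have := walk_equiv_winv_cat I g3; rewrite g4 => hc.
have -> : tree_loop (ptake i p) ++ tree_loop (pdrop tgt i p) =
    (gamma p.1 ++ map inl (take i p.2)) ++ (winv (gamma y) ++ gamma y) ++
    (map inl (drop i p.2) ++ winv (gamma (pend tgt p))).
  by rewrite /tree_loop pend_pdrop /= !catA.
have -> : tree_loop p = (gamma p.1 ++ map inl (take i p.2)) ++ [::] ++
    (map inl (drop i p.2) ++ winv (gamma (pend tgt p))).
  by rewrite /tree_loop -{1}(cat_take_drop i p.2) map_cat !catA.
apply: (walk_equiv_ctx (y := y) (z := y)) => //.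
- by rewrite wpath_cat g1 g2.
- by rewrite wend_cat g2 /y (pendE src).
- by rewrite wpath_cat i3 i4.
- by rewrite wend_cat i4 g4.
- by rewrite wpath_cat ht -(pendE src (pdrop tgt i p)) pend_pdrop.
Qed.

Lemma F_tree_loop_cat p i :
  pvalid src tgt (ptake i p) -> pvalid src tgt (pdrop tgt i p) ->
  F (tree_loop p) = F (tree_loop (pdrop tgt i p)) + F (tree_loop (ptake i p)).
Proof.
move=> hb ht; have [F_equiv F_cat] := hF.
have [cb ct] := (closed_tree_loop hb, closed_tree_loop ht).
rewrite addrC -F_cat //; apply/esym/F_equiv; first exact: closed_at_cat.
  exact/closed_tree_loop/(pvalid_cat hb ht).
exact: walk_equiv_tree_loop_cat.
Qed.

Lemma F_tree_loop_min_rel r u v : minimal_relation I r -> r u != 0 -> r v != 0 ->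
  F (tree_loop u) = F (tree_loop v).
Proof.
move=> hmin hu hv; have [[hr _] _ _] := hmin; have [F_equiv _] := hF.
have [e1 e2] := min_rel_parallel hnu hmin hu hv.
have [vu vv] := (pvalid_supp hr hu, pvalid_supp hr hv).
apply: F_equiv; try exact: closed_tree_loop.
have [g1 g2] := gamma_walk u.1.
have [] := wpath_winv (gamma_walk (pend tgt u)).1; rewrite (gamma_walk _).2 => i1 i2.
rewrite /tree_loop e1 e2; apply: (walk_equiv_ctx (y := u.1) (z := pend tgt u)) => //.
- by have := we_rel src tgt hmin hu hv; rewrite /path_walk e1.
- by rewrite -pvalidE.
- by move: vv; rewrite pvalidE e1.
- by rewrite (pendE src).
- by rewrite -e1 -e2 (pendE src).
Qed.

Lemma theta_rep_exists : (forall a, exists r, is_kQ r /\ nu r = a) ->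
  exists d, theta_rep src tgt nu gamma F d.
Proof.
move=> nu_surj; exists (diag_der src tgt nu (fun p => F (tree_loop p))); split.
  apply: derivation_diag_der => //; [exact: F_tree_loop_min_rel | exact: F_tree_loop_cat].
exact: diag_der_path F_tree_loop_min_rel.
Qed.

End TreeLoops.

Section Transport.
Variables (n : nat) (Ar : finType) (src tgt : Ar -> 'I_n) (k : fieldType) (A : falgType k).
Notation kq := (kQ n Ar k).
Notation is_kQ := (@is_kQ n Ar src tgt k).
Variables (gamma : 'I_n -> seq (letter Ar)) (F : seq (letter Ar) -> k).

Lemma alg_aut_sym (phi phi' : A -> A) : alg_aut phi phi' -> alg_aut phi' phi.
Proof.
case=> [[phiD phiZ phiM phi1] [phiK phiK']]; split; last by split.
have phi_inj := can_inj phiK.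
split=> [a b|c a|a b|]; apply: phi_inj.
- by rewrite phiD !phiK'.
- by rewrite phiZ !phiK'.
- by rewrite phiM !phiK'.
- by rewrite phi1 phiK'.
Qed.

Lemma theta_rep_push (nu mu : kq -> A) (phi phi' : A -> A) d :
  alg_aut phi phi' ->
  (forall u, pvalid src tgt u -> phi (nu (kQpath k u)) = mu (kQpath k u)) ->
  theta_rep src tgt nu gamma F d -> theta_rep src tgt mu gamma F (push phi phi' d).
Proof.
move=> hphi phi_nu [[dD dZ dM] d_path].
have [[phi'D phi'Z phi'M _] _] := alg_aut_sym hphi.
have [[phiD phiZ phiM _] [phiK phiK']] := hphi.
split; first split=> [a b|c a|a b]; rewrite /push.
- by rewrite phi'D dD phiD.
- by rewrite phi'Z dZ phiZ.
- by rewrite phi'M dM phiD !phiM !phiK'.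
by move=> u hu; rewrite -phi_nu // phiK d_path // phiZ.
Qed.

Lemma derivation_eq_on_paths (nu : kq -> A) (d1 d2 : A -> A) :
  alg_hom_kQ src tgt nu -> (forall a, exists r, is_kQ r /\ nu r = a) ->
  derivation d1 -> derivation d2 ->
  (forall u, pvalid src tgt u -> d1 (nu (kQpath k u)) = d2 (nu (kQpath k u))) ->
  d1 =1 d2.
Proof.
move=> hnu nu_surj [d1D d1Z _] [d2D d2Z _] d12 a.
have [r [hr <-]] := nu_surj a; have [nuD nuZ _ _] := hnu.
move: r hr; apply: (is_kQ_ind (P := fun r => d1 (nu r) = d2 (nu r))) => [|c u r hu hr IH].
  by rewrite (nu0 hnu) -(scale0r (0 : A)) d1Z d2Z !scale0r.
have hu' := is_kQ_path (k := k) hu.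
by rewrite (nuD _ _ (is_kQ_scale c hu') hr) (nuZ _ _ hu') d1D d2D d1Z d2Z d12 ?IH.
Qed.

Lemma theta_rep_unique (nu : kq -> A) d1 d2 :
  alg_hom_kQ src tgt nu -> (forall a, exists r, is_kQ r /\ nu r = a) ->
  theta_rep src tgt nu gamma F d1 -> theta_rep src tgt nu gamma F d2 -> d1 =1 d2.
Proof.
move=> hnu nu_surj [der1 d1_path] [der2 d2_path].
apply: derivation_eq_on_paths hnu nu_surj der1 der2 _ => u hu.
by rewrite d1_path // d2_path.
Qed.

Lemma thetaP (nu : kq -> A) d : theta_rep src tgt nu gamma F d ->
  theta_rep src tgt nu gamma F (theta src tgt nu gamma F).
Proof. by move=> hd; apply: epsilon_spec; exists d. Qed.

End Transport.

Lemma hh1_eq_eqfun (k : fieldType) (A : falgType k) n (e : 'I_n -> A) (d1 d2 : A -> A) :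
  d1 =1 d2 -> hh1_eq e d1 d2.
Proof.
move=> d12; exists (fun _ => 0) => a.
by rewrite big1 => [|i _]; rewrite ?scale0r // mul0r mulr0 subr0 d12 subrr.
Qed.

Theorem proposition3p3 (k : closedFieldType) (n : nat) (Ar : finType)
  (src tgt : Ar -> 'I_n) (A : falgType k) (e : 'I_n -> A)
  (He : complete_prim_orth e) (Hbasic : basic_wrt e) (Hconn : connected_alg A)
  (Hacyc : acyclic_quiver src tgt)
  (nu : kQ n Ar k -> A) (Hnu : presentation src tgt e nu)
  (psi : kQ n Ar k -> kQ n Ar k) (Hpsi : kQ_aut src tgt psi)
  (Hpsie : forall i, psi (@kQe n Ar k i) = @kQe n Ar k i)
  (HpsiI : (forall r, in_ker src tgt nu r -> in_ker src tgt nu (psi r)) /\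
           (forall s, in_ker src tgt nu s -> exists r, in_ker src tgt nu r /\ psi r = s))
  (psib psibinv : A -> A) (Hpsib : alg_aut psib psibinv)
  (Hpsibmu : forall r, is_kQ src tgt r -> psib (nu (psi r)) = nu (psi (psi r)))
  (T : {set Ar}) (HT : spanning_tree src tgt T) (x0 : 'I_n)
  (gamma : 'I_n -> seq (letter Ar)) (Hgamma : tree_geodesics src tgt T x0 gamma) :
  let mu := fun r => nu (psi r) in
  (forall F, pi1_hom src tgt (in_ker src tgt nu) x0 F ->
     hh1_eq e (theta src tgt mu gamma F) (push psib psibinv (theta src tgt nu gamma F))) /\
  (forall F, pi1_hom src tgt (in_ker src tgt nu) x0 F -> exists G,
     pi1_hom src tgt (in_ker src tgt nu) x0 G /\
     hh1_eq e (theta src tgt mu gamma F) (push psib psibinv (theta src tgt nu gamma G))) /\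
  (forall G, pi1_hom src tgt (in_ker src tgt nu) x0 G -> exists F,
     pi1_hom src tgt (in_ker src tgt nu) x0 F /\
     hh1_eq e (theta src tgt mu gamma F) (push psib psibinv (theta src tgt nu gamma G))).
Proof.
move=> mu; have [hnu nu_surj _ _] := Hnu.
have gamma_walk x : wpath src tgt x0 (gamma x) /\ wend src tgt (x0, gamma x) = x.
  by have [] := Hgamma x; rewrite wvalidE.
have [_ [_ [psi' [psi'_kQ _ psiK']]]] := Hpsi.
have psib_nu u : pvalid src tgt u -> psib (nu (kQpath k u)) = mu (kQpath k u).
  move=> /(is_kQ_path (k := k)) hu.
  by rewrite /mu -{1}(psiK' _ hu) (Hpsibmu _ (psi'_kQ _ hu)) psiK'.
have psibinv_mu u : pvalid src tgt u -> psibinv (mu (kQpath k u)) = nu (kQpath k u).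
  by move=> hu; rewrite -psib_nu //; case: Hpsib => _ [].
have thetaE F : pi1_hom src tgt (in_ker src tgt nu) x0 F ->
    hh1_eq e (theta src tgt mu gamma F) (push psib psibinv (theta src tgt nu gamma F)).
  move=> hF; have [d /thetaP theta_nu] := theta_rep_exists hnu gamma_walk hF nu_surj.
  have /thetaP theta_mu := theta_rep_push Hpsib psib_nu theta_nu.
  have := theta_rep_push (alg_aut_sym Hpsib) psibinv_mu theta_mu.
  move/(theta_rep_unique hnu nu_surj theta_nu) => theta_nuE.
  apply: hh1_eq_eqfun => a; have [_ [_ psibK']] := Hpsib.
  by rewrite /push theta_nuE /push !psibK'.
split; first exact: thetaE.
by split=> F hF; exists F; split=> //; exact: thetaE.
Qed.
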